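(* Let $n\ge 1$ and $N=2^n$. Let $H=\frac{1}{\sqrt2}\begin{bmatrix}1&1\\1&-1\end{bmatrix}$ be the Hadamard matrix and let $Z_{2N}$ be the $2N\times 2N$ cyclic downshift matrix, i.e. $Z_{2N}\ket{j}=\ket{(j+1)\bmod 2N}$ for $j=0,\dots,2N-1$. Define the block-diagonal unitary $$Z_{\rm block}=\sum_{k=0}^{N-1}\ket{k}\bra{k}\otimes Z_{2N}^{\,k}\in\mathbb{C}^{N\cdot 2N\times N\cdot 2N},$$ (first tensor factor: an $n$-qubit register indexed by $k\in\{0,\dots,N-1\}$; second factor: an $(n+1)$-qubit register indexed by $\{0,\dots,2N-1\}$), and $$U_L=(H^{\otimes n}\otimes I_{2N})\,Z_{\rm block}\,(H^{\otimes n}\otimes I_{2N}).$$ Let $L$ be the $N\times N$ lower triangular matrix with all entries on and below the diagonal equal to $1$ and all entries above the diagonal equal to $0$. Then for all $i,j\in\{0,\dots,N-1\}$, $$(\bra{0^n}\otimes\bra{i})\,U_L\,(\ket{0^n}\otimes\ket{j})=\frac{1}{N}L_{ij},$$ where $\ket{i},\ket{j}$ denote standard basis vectors of $\mathbb{C}^{2N}$ (so the indices $i,j<N$ correspond to the most significant qubit of the second register being $0$). In other words, $U_L$ is an $(N,\log_2 N+1,0)$-block encoding of $L$. *)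

(* Kronecker product: mathcomp.real_closed.mxtens (A *t B),
   first factor = most significant index: (A *t B) (i*p+j) (k*q+l) = A i k * B j l. *)
From mathcomp Require Import all_boot all_order all_algebra.
From mathcomp Require Export mxtens.
Set Implicit Arguments. Unset Strict Implicit. Unset Printing Implicit Defensive.
Import GRing.Theory Num.Theory.
Local Open Scope ring_scope.

Section QDefs.
Variable C : numClosedFieldType.

Definition hadamard : 'M[C]_2 :=
  (sqrtC 2)^-1 *: \matrix_(i < 2, j < 2) (if (i == 1%N :> nat) && (j == 1%N :> nat) then -1 else 1).

Fixpoint hadamard_pow (n : nat) : 'M[C]_(2 ^ n) :=
  match n return 'M[C]_(2 ^ n) with
  | 0 => 1%:M
  | n'.+1 => castmx (esym (expnS 2 n'), esym (expnS 2 n')) (hadamard *t hadamard_pow n')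
  end.

Definition downshift (m : nat) : 'M[C]_m :=
  \matrix_(i < m, j < m) (if (i : nat) == ((j.+1) %% m)%N then 1 else 0).

Definition Zblock (n : nat) : 'M[C]_(2 ^ n * (2 * 2 ^ n)) :=
  \sum_(k < 2 ^ n) (delta_mx k k : 'M[C]_(2 ^ n)) *t (downshift (2 * 2 ^ n)) ^+ k.

Definition UL (n : nat) : 'M[C]_(2 ^ n * (2 * 2 ^ n)) :=
  (hadamard_pow n *t (1%:M : 'M[C]_(2 * 2 ^ n))) *m Zblock n
    *m (hadamard_pow n *t (1%:M : 'M[C]_(2 * 2 ^ n))).

Definition lower_ones (N : nat) : 'M[C]_N :=
  \matrix_(i < N, j < N) (if (j <= i)%N then 1 else 0).

End QDefs.

Definition ket {C : numClosedFieldType} {m : nat} (i : 'I_m) : 'cV[C]_m := delta_mx i 0.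
Definition bra {C : numClosedFieldType} {m : nat} (i : 'I_m) : 'rV[C]_m := delta_mx 0 i.

Lemma pow2_gt0 (n : nat) : (0 < 2 ^ n)%N.
Proof. by rewrite expn_gt0. Qed.
Definition zidx (n : nat) : 'I_(2 ^ n) := Ordinal (pow2_gt0 n).

Lemma pow2_le_double (n : nat) : (2 ^ n <= 2 * 2 ^ n)%N.
Proof. by rewrite leq_pmull. Qed.
Definition lowidx (n : nat) (i : 'I_(2 ^ n)) : 'I_(2 * 2 ^ n) :=
  widen_ord (pow2_le_double n) i.

(* Conjugating [|k><k| (x) Z^k] by [H^n (x) I] and projecting onto [|0^n>] in
   the first register leaves the weight [<0|H^n|k><k|H^n|0> = 1/N] in front of
   [<i|Z^k|j>], which is [1] exactly when [i = j + k] (no wrap-around occurs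
   since [i, j, k < N] and [Z] acts on [2N] points).  Summing over [k] counts
   the [k < N] with [i = j + k], i.e. gives [L_ij].  The argument also works
   for [n = 0]. *)
From mathcomp Require Import all_boot all_order all_algebra.
Import GRing.Theory Num.Theory.
Local Open Scope ring_scope.

Lemma sum_eq_addn N (i j : 'I_N) :
  (\sum_(k < N) (i == j + k :> nat))%N = (j <= i)%N.
Proof.
case: (leqP j i) => [le_ji | lt_ij].
  have lt_ijN : (i - j < N)%N by apply: leq_ltn_trans (leq_subr _ _) (ltn_ord i).
  rewrite (bigD1 (Ordinal lt_ijN)) //= subnKC // eqxx big1 // => k ne_k.
  apply/eqP; rewrite eqb0; apply: contra ne_k => /eqP def_i.
  by apply/eqP/val_inj; rewrite /= def_i addKn.
rewrite big1 // => k _; apply/eqP; rewrite eqb0; apply/negP => /eqP def_i.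
by move: lt_ij; rewrite def_i ltnNge leq_addr.
Qed.

Section BlockEncoding.
Variable C : numClosedFieldType.

Lemma mulmx_bra_ket m p (M : 'M[C]_(m, p)) a b : bra a *m M *m ket b = (M a b)%:M.
Proof.
rewrite /bra -rowE /ket -colE.
by apply/matrixP=> x y; rewrite [x]ord1 [y]ord1 !mxE.
Qed.

Lemma tens_scalar_mx11 (x y : C) : (x%:M : 'M_1) *t (y%:M : 'M_1) = (x * y)%:M.
Proof. by apply/matrixP=> a b; rewrite [a]ord1 [b]ord1 !mxE !eqxx !mulr1n. Qed.

Lemma tens_bra_ket m p q r (A : 'M[C]_(m, p)) (B : 'M[C]_(q, r)) a b c d :
  (bra a *t bra b) *m (A *t B) *m (ket c *t ket d) = (A a c * B b d)%:M.
Proof. by rewrite !tensmx_mul !mulmx_bra_ket tens_scalar_mx11. Qed.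

Lemma mul_delta_mxE m p q (A : 'M[C]_(m, p)) (B : 'M[C]_(p, q)) k a b :
  (A *m delta_mx k k *m B) a b = A a k * B k b.
Proof.
rewrite -(mul_delta_mx (0 : 'I_1)) mulmxA -colE -mulmxA -rowE.
by rewrite !mxE big_ord1 !mxE.
Qed.

Lemma hadamard_pow_border n (a b : 'I_(2 ^ n)) :
  (a == 0 :> nat) || (b == 0 :> nat) -> hadamard_pow C n a b = (sqrtC 2)^-1 ^+ n.
Proof.
elim: n a b => [|n IHn] a b ab0.
  rewrite mxE; suff -> : a = b by rewrite eqxx.
  by apply/val_inj; case: a b ab0 => [[|a] lta] [[|b] ltb].
rewrite /= castmxE !mxE /= IHn; last first.
  change ((a %% 2 ^ n == 0) || (b %% 2 ^ n == 0))%N.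
  by case/orP: ab0 => /eqP ->; rewrite mod0n eqxx ?orbT.
suff -> : ((a %/ 2 ^ n == 1) && (b %/ 2 ^ n == 1))%N = false by rewrite mulr1 exprS.
by case/orP: ab0 => /eqP ->; rewrite div0n ?andbF.
Qed.

Lemma hadamard_pow_delta00 n (k : 'I_(2 ^ n)) :
  (hadamard_pow C n *m delta_mx k k *m hadamard_pow C n) (zidx n) (zidx n)
    = (2 ^ n)%:R^-1.
Proof.
rewrite mul_delta_mxE !hadamard_pow_border ?eqxx ?orbT //.
by rewrite -exprMn -expr2 exprVn sqrtCK natrX exprVn.
Qed.

Lemma downshiftX_mxE m k (a b : 'I_m) :
  (downshift C m ^+ k) a b = (val a == (b + k) %% m)%N%:R.
Proof.
elim: k b => [|k IHk] b.
  by rewrite expr0 !mxE addn0 modn_small.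
have lt_b1 : (b.+1 %% m < m)%N.
  by rewrite ltn_pmod // (leq_ltn_trans (leq0n b) (ltn_ord b)).
rewrite exprSr mxE (bigD1 (Ordinal lt_b1)) //= big1 => [|c ne_c]; last first.
  rewrite [downshift _ _ _ _]mxE.
  by case: eqP => [def_c | _]; [case/eqP: ne_c; apply: val_inj | rewrite mulr0].
by rewrite IHk [downshift _ _ _ _]mxE eqxx mulr1 addr0 /= modnDml addSnnS.
Qed.

Lemma UL_tens_sum n :
  UL C n = \sum_(k < 2 ^ n) (hadamard_pow C n *m delta_mx k k *m hadamard_pow C n)
                              *t downshift C (2 * 2 ^ n) ^+ k.
Proof.
rewrite /UL /Zblock mulmx_sumr mulmx_suml; apply: eq_bigr => k _.
by rewrite !tensmx_mul mulmx1 mul1mx.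
Qed.

End BlockEncoding.

Theorem theorem9 (C : numClosedFieldType) (n : nat) (hn : (1 <= n)%N)
    (i j : 'I_(2 ^ n)) :
  (bra (zidx n) *t bra (lowidx i)) *m UL C n *m (ket (zidx n) *t ket (lowidx j))
  = (((2 ^ n)%:R)^-1 * lower_ones C (2 ^ n) i j)%:M.
Proof.
rewrite UL_tens_sum mulmx_sumr mulmx_suml.
under eq_bigr => k _ do rewrite tens_bra_ket hadamard_pow_delta00 downshiftX_mxE.
have no_wrap (k : 'I_(2 ^ n)) : ((j + k) %% (2 * 2 ^ n) = j + k)%N.
  by rewrite modn_small // mul2n -addnn -addSn leq_add // ltnW.
under eq_bigr => k _ do rewrite /= no_wrap.
by rewrite -raddf_sum -mulr_sumr -natr_sum sum_eq_addn mxE; case: (j <= i)%N.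
Qed.
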